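(* The semi-metric space $(\mathcal D_n^+,d_s)$ is complete: every sequence $(\Delta^{(k)})_{k\ge0}$ in $\mathcal D_n^+$ such that for every $\varepsilon>0$ there is $K$ with $d_s(\Delta^{(p)},\Delta^{(q)})\le\varepsilon$ for all $p,q\ge K$ converges for $d_s$ to some $\Delta^{(\infty)}\in\mathcal D_n^+$, i.e. $d_s(\Delta^{(k)},\Delta^{(\infty)})\to0$.
   Context: $\mathcal D_n^+$ is the set of $n\times n$ diagonal matrices with positive diagonal entries, and $d_s(\Delta,\Delta')=\max_i\frac{|\Delta_i-\Delta'_i|}{\sqrt{\Delta_i\Delta'_i}}$. *)

From HB Require Import structures.
From mathcomp Require Import all_boot all_order all_algebra.
From mathcomp Require Import reals.
Set Implicit Arguments. Unset Strict Implicit. Unset Printing Implicit Defensive.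
Import Order.TTheory GRing.Theory Num.Theory.
Local Open Scope ring_scope.

Definition posdiag (R : realType) (n : nat) (D : 'M[R]_n) : Prop :=
  is_diag_mx D /\ forall i : 'I_n, 0 < D i i.

Definition d_s (R : realType) (n : nat) (D D' : 'M[R]_n) : R :=
  \big[Num.max/0]_(i < n) (`|D i i - D' i i| / Num.sqrt (D i i * D' i i)).

From HB Require Import structures.
From mathcomp Require Import all_boot all_order all_algebra.
From mathcomp Require Import reals topology normedtype.
From mathcomp Require Import lra.
Import Order.TTheory GRing.Theory Num.Theory.
Import numFieldNormedType.Exports.

(* On each diagonal coordinate, [d_s] is the relative distance
   [|x - y| / sqrt (x y)] on positive reals.  A Cauchy sequence for it is
   eventually trapped in an interval [[m, M]] with [0 < m], because
   [reldist x y <= 1] forces [x <= 3 y].  On such an interval the relative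
   distance and [|x - y|] are comparable (up to the factors [M] and [1 / m]),
   so the sequence converges in the usual sense to some [L >= m > 0], hence
   also for the relative distance.  The diagonal matrix of these limits is the
   limit for [d_s], a maximum over finitely many coordinates. *)

Set Implicit Arguments. Unset Strict Implicit. Unset Printing Implicit Defensive.
Local Open Scope ring_scope.

Definition cauchy_by {T : Type} {R : numDomainType} (d : T -> T -> R)
    (u : nat -> T) : Prop :=
  forall eps : R, 0 < eps -> exists K : nat, forall p q : nat,
    (K <= p)%N -> (K <= q)%N -> d (u p) (u q) <= eps.

Definition converges_by {T : Type} {R : numDomainType} (d : T -> T -> R)
    (u : nat -> T) (l : T) : Prop :=
  forall eps : R, 0 < eps -> exists K : nat, forall k : nat,
    (K <= k)%N -> d (u k) l <= eps.

Lemma cauchy_by_nonexpansive (T U : Type) (R : numDomainType)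
    (d : T -> T -> R) (e : U -> U -> R) (f : U -> T) (u : nat -> U) :
  (forall x y, d (f x) (f y) <= e x y) -> cauchy_by e u -> cauchy_by d (f \o u).
Proof.
move=> fe ue eps eps0; have [K HK] := ue eps eps0.
by exists K => p q Kp Kq; apply: le_trans (fe _ _) (HK p q Kp Kq).
Qed.

Lemma eventually_bigmax_le (I : finType) (R : realDomainType)
    (F : I -> nat -> R) (eps : R) : 0 <= eps ->
  (forall i, exists K : nat, forall k, (K <= k)%N -> F i k <= eps) ->
  exists K : nat, forall k, (K <= k)%N -> \big[Num.max/0]_i F i k <= eps.
Proof.
move=> eps0 /fin_all_exists[K HK]; exists (\max_i K i) => k Kk.
apply: bigmax_le => // i _; apply: HK.
exact: leq_trans (leq_bigmax i) Kk.
Qed.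

Lemma ge_sqrtr_mul (R : rcfType) (m x y : R) : 0 <= m -> m <= x -> m <= y ->
  m <= Num.sqrt (x * y).
Proof.
move=> m0 mx my; rewrite -(ger0_norm m0) -sqrtr_sqr ler_sqrt.
  by rewrite expr2 ler_pM.
by rewrite mulr_ge0 // (le_trans m0).
Qed.

Lemma le_sqrtr_mul (R : rcfType) (M x y : R) :
  0 <= x -> 0 <= y -> x <= M -> y <= M -> Num.sqrt (x * y) <= M.
Proof.
move=> x0 y0 xM yM; rewrite -(ger0_norm (le_trans x0 xM)) -sqrtr_sqr ler_sqrt.
  by rewrite expr2 ler_pM.
by rewrite sqr_ge0.
Qed.

Lemma cauchy_by_normr_cvg (R : realType) (u : nat -> R) :
  cauchy_by (fun x y => `|x - y|) u -> cvgn u.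
Proof.
move=> Hc; apply: cauchy_cvg; apply: cauchy_exP => e e0.
have [K HK] := Hc (e / 2) (divr_gt0 e0 (ltr0Sn _ 1)).
exists (u K); exists K => // k /= Kk; rewrite /ball /=.
by apply: le_lt_trans (HK K k (leqnn K) Kk) _; lra.
Qed.

Definition reldist {R : realType} (x y : R) : R := `|x - y| / Num.sqrt (x * y).

Section RelativeDistance.
Variable R : realType.
Implicit Types x y m M : R.

Lemma reldistC x y : reldist x y = reldist y x.
Proof. by rewrite /reldist distrC [x * y]mulrC. Qed.

Lemma reldist_mul_sqrt x y : 0 < x -> 0 < y ->
  reldist x y * Num.sqrt (x * y) = `|x - y|.
Proof. by move=> x0 y0; rewrite mulfVK // gt_eqF // sqrtr_gt0 mulr_gt0. Qed.

Lemma reldist_le_normr m x y : 0 < m -> m <= x -> m <= y ->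
  reldist x y <= `|x - y| / m.
Proof.
move=> m0 mx my; have xy0 : 0 < x * y by rewrite mulr_gt0 // (lt_le_trans m0).
rewrite ler_wpM2l // lef_pV2 ?posrE ?sqrtr_gt0 //.
exact: ge_sqrtr_mul (ltW m0) mx my.
Qed.

Lemma normr_le_reldist M x y : 0 < x -> 0 < y -> x <= M -> y <= M ->
  `|x - y| <= M * reldist x y.
Proof.
move=> x0 y0 xM yM; rewrite -reldist_mul_sqrt // mulrC ler_wpM2r //.
  by rewrite /reldist divr_ge0 ?sqrtr_ge0.
exact: le_sqrtr_mul (ltW x0) (ltW y0) xM yM.
Qed.

(* Any constant above [(3 + sqrt 5) / 2] would do. *)
Lemma reldist_le1_ratio x y : 0 < x -> 0 < y -> reldist x y <= 1 ->
  x <= 3 * y.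
Proof.
move=> x0 y0; have s0 : 0 < Num.sqrt (x * y) by rewrite sqrtr_gt0 mulr_gt0.
rewrite -(ler_pM2r s0) reldist_mul_sqrt // mul1r ler_norml => /andP[_ xy].
have ss : Num.sqrt (x * y) * Num.sqrt (x * y) = x * y.
  by rewrite -expr2 sqr_sqrtr // mulr_ge0 // ltW.
nra.
Qed.

Section CauchySequence.
Variable u : nat -> R.
Hypothesis u_gt0 : forall k, 0 < u k.
Hypothesis u_cauchy : cauchy_by reldist u.

Lemma reldist_cauchy_bounded :
  exists m M K, 0 < m /\ forall k, (K <= k)%N -> m <= u k <= M.
Proof.
have [K HK] := u_cauchy ltr01.
have uK0 := u_gt0 K.
exists (u K / 3), (3 * u K), K; split; first exact: divr_gt0.
move=> k Kk; have dk := HK k K Kk (leqnn K).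
have lo : u K <= 3 * u k by apply: reldist_le1_ratio; rewrite // reldistC.
have hi : u k <= 3 * u K by apply: reldist_le1_ratio.
apply/andP; split; lra.
Qed.

Lemma reldist_cauchy_normr : cauchy_by (fun x y => `|x - y|) u.
Proof.
have [m [M [K [m0 bnd]]]] := reldist_cauchy_bounded.
have M0 : 0 < M.
  by have /andP[mK KM] := bnd K (leqnn K); apply: lt_le_trans (le_trans mK KM).
move=> e e0; have [K' HK'] := u_cauchy (divr_gt0 e0 M0).
exists (maxn K K') => p q; rewrite !geq_max => /andP[Kp K'p] /andP[Kq K'q].
have /andP[_ pM] := bnd p Kp; have /andP[_ qM] := bnd q Kq.
apply: le_trans (normr_le_reldist (u_gt0 p) (u_gt0 q) pM qM) _.
by rewrite -ler_pdivlMl // mulrC HK'.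
Qed.

Lemma reldist_cauchy_cvg : exists2 L, 0 < L & converges_by reldist u L.
Proof.
have [m [M [K [m0 bnd]]]] := reldist_cauchy_bounded.
have ucvg := cauchy_by_normr_cvg reldist_cauchy_normr.
have mL : m <= limn u.
  by apply: limr_ge => //; exists K => // k Kk; have /andP[] := bnd k Kk.
exists (limn u); first exact: lt_le_trans mL.
move=> e e0; have /cvgrPdist_le/(_ _ (mulr_gt0 e0 m0))[K' _ HK'] := ucvg.
exists (maxn K K') => k; rewrite geq_max => /andP[Kk K'k].
have /andP[mk _] := bnd k Kk.
apply: le_trans (reldist_le_normr m0 mk mL) _.
by rewrite ler_pdivrMr // distrC HK'.
Qed.

End CauchySequence.
End RelativeDistance.

Theorem mainTheorem8 (R : realType) (n : nat) (Dk : nat -> 'M[R]_n) :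
  (forall k, posdiag (Dk k)) ->
  (forall eps : R, 0 < eps -> exists K : nat, forall p q : nat,
      (K <= p)%N -> (K <= q)%N -> d_s (Dk p) (Dk q) <= eps) ->
  exists Dinf : 'M[R]_n, posdiag Dinf /\
    (forall eps : R, 0 < eps -> exists K : nat, forall k : nat,
      (K <= k)%N -> d_s (Dk k) Dinf <= eps).
Proof.
move=> Dk_pos Dk_cauchy; have {}Dk_cauchy : cauchy_by (@d_s R n) Dk := Dk_cauchy.
have coord_cvg (i : 'I_n) : exists2 L, 0 < L & converges_by reldist (fun k => Dk k i i) L.
  apply: reldist_cauchy_cvg => [k|]; first exact: (Dk_pos k).2.
  apply: (cauchy_by_nonexpansive (f := fun D : 'M[R]_n => D i i) _ Dk_cauchy) => D D'.
  exact: (le_bigmax _ (fun j => reldist (D j j) (D' j j))).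
have [L L_gt0 L_lim] := fin_all_exists2 coord_cvg.
have diagL i : diag_mx (\row_j L j) i i = L i by rewrite !mxE eqxx mulr1n.
exists (diag_mx (\row_j L j)); split.
  by split=> [|i]; rewrite ?diag_mx_is_diag ?diagL.
move=> e e0; apply: eventually_bigmax_le (ltW e0) _ => i.
by rewrite diagL; apply: L_lim.
Qed.
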